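(* Let $J$ be a finite set with $|J|$ even. Then $\mathrm{EvenNAE}_J$ has a 2-decomposition.
   Context: $\mathrm{EvenNAE}_J:\{0,1\}^J\to\{0,1\}$ takes value $1$ exactly on those $x$ with $\sum_{i\in J}x_i$ even and $1\le\sum_{i\in J}x_i\le|J|-1$. For $x\in\{0,1\}^J$ and $S\subseteq J$, $x\oplus\mathbf S$ is $x$ with the coordinates in $S$ flipped. A function $H:\{0,1\}^J\to\mathbb{Q}_{\ge0}$ has a 2-decomposition if there are values $D(x,M)\ge0$, for $x\in\{0,1\}^J$ and $M$ ranging over partitions of $J$ into pairs, with $H(x)=\sum_MD(x,M)$ for all $x$ and $D(x\oplus\mathbf S,M)=D(x,M)$ for all $x,M$ and $S\in M$. *)

From HB Require Import structures.
From mathcomp Require Import all_boot all_order all_algebra.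
Set Implicit Arguments. Unset Strict Implicit. Unset Printing Implicit Defensive.
Import Order.TTheory GRing.Theory Num.Theory.

(* A point x in {0,1}^J is a finite function J -> bool (true = 1). *)

Definition weight (J : finType) (x : {ffun J -> bool}) : nat := #|[set i | x i]|.

Definition EvenNAE (J : finType) (x : {ffun J -> bool}) : rat :=
  ((~~ odd (weight x)) && (1 <= weight x) && (weight x <= #|J| - 1))%N%:R.

Definition flip (J : finType) (x : {ffun J -> bool}) (S : {set J}) : {ffun J -> bool} :=
  [ffun i => if i \in S then ~~ x i else x i].

Definition pair_partition (J : finType) (M : {set {set J}}) : bool :=
  partition M [set: J] && [forall S in M, #|S| == 2%N].

Definition has_2_decomposition (J : finType) (H : {ffun J -> bool} -> rat) : Prop :=
  exists D : {ffun J -> bool} -> {set {set J}} -> rat,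
    [/\ (forall x M, pair_partition M -> 0 <= D x M)%R,
        (forall x, H x = \sum_(M : {set {set J}} | pair_partition M) D x M)%R
      & (forall x M S, pair_partition M -> S \in M -> D (flip x S) M = D x M)].

From HB Require Import structures.
From mathcomp Require Import all_boot all_order all_algebra all_fingroup zify.
Set Implicit Arguments. Unset Strict Implicit. Unset Printing Implicit Defensive.
Import Order.TTheory GRing.Theory Num.Theory.

(* Fix a base matching of J into pairs {first t, second t}, t in Z/KZ.  A point
   z is "linked" when, cyclically, pair t reads 10 exactly when pair t+1 reads
   01; the seed of z is 0 on odd weight and 1 - sign z otherwise, where sign z
   is (-1)^(number of 10 pairs) on linked points and 0 elsewhere.  The seed is
   nonnegative, and flipping a base pair affects it exactly like transposing
   that pair (both only swap the patterns 10 and 01).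
   On each weight class the seed has the same total as EvenNAE: their
   difference is the defect sign z - [z constant], and toggling the second
   coordinates around the first descent of a linked point is a weight-preserving
   involution reversing the defect, so the defect sums to zero.
   Since relabellings act transitively on weight classes, averaging the seed
   over all permutations g of J gives EvenNAE.  Grouping the permutations by the
   matching g(base) defines D(x, M); flipping a pair S of M amounts to composing
   g with the transposition of the base pair sent onto S, whence invariance. *)

Section Flips.
Variable J : finType.
Implicit Types (x z : {ffun J -> bool}) (g : {perm J}).

Lemma flipK x S : flip (flip x S) S = x.
Proof. by apply/ffunP => i; rewrite !ffunE; case: (i \in S); rewrite ?negbK. Qed.

Lemma flip2 x a b : a != b -> flip x [set a; b] = flip (flip x [set a]) [set b].
Proof.
move=> hab; apply/ffunP => i; rewrite !ffunE !inE.
by case: (eqVneq i a) => [->|//]; rewrite (negbTE hab).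
Qed.

Lemma weight_flip1 x a : (weight (flip x [set a]) + x a = weight x + ~~ x a)%N.
Proof.
rewrite /weight (cardsD1 a [set i | x i]) (cardsD1 a [set i | flip x [set a] i]).
have -> : [set i | flip x [set a] i] :\ a = [set i | x i] :\ a.
  by apply/setP => i; rewrite !inE ffunE inE; case: eqP.
by rewrite !inE ffunE inE eqxx; case: (x a) => /=; lia.
Qed.

Lemma weight_flip2 x a b : a != b -> x a != x b ->
  weight (flip x [set a; b]) = weight x.
Proof.
move=> hab hx; have h1 := weight_flip1 x a.
have := weight_flip1 (flip x [set a]) b.
rewrite -flip2 // ffunE inE eq_sym (negbTE hab).
by move: hx h1; case: (x a); case: (x b) => //= _; lia.
Qed.

Lemma odd_weight_flip2 x a b : a != b ->
  odd (weight (flip x [set a; b])) = odd (weight x).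
Proof.
move=> hab; have h1 := weight_flip1 x a.
have := weight_flip1 (flip x [set a]) b.
rewrite -flip2 // ffunE inE eq_sym (negbTE hab).
move=> /(congr1 odd); move/(congr1 odd): h1; rewrite !oddD.
move: (odd (weight _)) (odd (weight (flip x [set a]))) (odd (weight x)) => p q r.
by case: (x a); case: (x b); case: p; case: q; case: r.
Qed.

Definition relabel x g : {ffun J -> bool} := [ffun j => x (g j)].

Lemma relabel_inj g : injective (relabel^~ g).
Proof.
move=> y1 y2 /ffunP h; apply/ffunP => j.
by have := h (g^-1 j)%g; rewrite !ffunE permKV.
Qed.

Lemma weight_relabel x g : weight (relabel x g) = weight x.
Proof.
rewrite /weight -(card_preimset [set i | x i] (@perm_inj _ g)).
by apply: eq_card => i; rewrite !inE ffunE.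
Qed.

Lemma weight_le x : (weight x <= #|J|)%N.
Proof. by rewrite /weight -cardsT subset_leq_card // subsetT. Qed.

(* Weight as a count of trues; on boolean sequences such counts determine every
   count, hence equal weights give permuted graphs. *)
Lemma weight_count x : weight x = count id (fgraph x).
Proof.
by rewrite /weight cardsE cardE /enum_mem size_filter -codom_ffun codomE enumT count_map.
Qed.

Lemma count_bool (s : seq bool) (a : pred bool) :
  count a s = (a true * count id s + a false * (size s - count id s))%N.
Proof.
elim: s => [|c s IH] /=; first by rewrite !muln0.
by have := count_size id s; rewrite IH; case: c; case: (a true); case: (a false) => /=; lia.
Qed.

Lemma relabel_transitive x y : weight x = weight y -> exists g, y = relabel x g.
Proof.
move=> hw.
have /tuple_permP[p hp] : perm_eq (fgraph y) (fgraph x).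
  apply/seq.permP => a; rewrite (count_bool (fgraph y)) (count_bool (fgraph x)).
  by rewrite !size_tuple -!weight_count hw.
have hy i : y (enum_val i) = x (enum_val (p i)).
  rewrite -!tnth_fgraph.
  have -> : fgraph y = [tuple tnth (fgraph x) (p i) | i < #|J|] by apply: val_inj.
  by rewrite tnth_mktuple.
have ginj : injective (fun j => enum_val (p (enum_rank j))).
  by move=> j1 j2 /enum_val_inj /perm_inj /enum_rank_inj.
exists (perm ginj); apply/ffunP => j.
by rewrite ffunE permE -{1}(enum_rankK j) hy.
Qed.

Lemma sum_weight_class_relabel (F : {ffun J -> bool} -> rat) g w :
  (\sum_(y | weight y == w) F (relabel y g) = \sum_(z | weight z == w) F z)%R.
Proof.
rewrite [RHS](reindex_inj (@relabel_inj g)) /=.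
by apply: eq_bigl => y; rewrite weight_relabel.
Qed.

Definition constant x := [forall j, x j] || [forall j, ~~ x j].

Lemma constantE x : constant x = (weight x == 0)%N || (weight x == #|J|).
Proof.
have eT : (weight x == #|J|) = ([set i | x i] == [set: J]).
  by rewrite eqEcard subsetT cardsT eqn_leq weight_le.
rewrite /constant eT /weight cards_eq0 [RHS]orbC; congr orb.
- apply/forallP/eqP => [h|h]; first by apply/setP => j; rewrite !inE h.
  by move=> j; move/setP: h => /(_ j); rewrite !inE.
- apply/forallP/eqP => [h|h]; first by apply/setP => j; rewrite !inE (negbTE (h j)).
  by move=> j; move/setP: h => /(_ j); rewrite !inE => ->.
Qed.

Lemma EvenNAEE x : EvenNAE x = ((~~ odd (weight x))%:R * (1 - (constant x)%:R))%R.
Proof.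
rewrite /EvenNAE constantE; have := weight_le x; move: (weight x) => w hw.
case: (odd w); rewrite /= ?mul0r //.
have [->|w0] := eqVneq w 0%N; first by rewrite /= subrr mulr0.
have [->|wn] := eqVneq w #|J|.
  by rewrite orbT subrr mulr0; case: #|J| => // m; rewrite subn1 ltnn andbF.
by rewrite /= subr0 mulr1; have -> : (1 <= w <= #|J| - 1)%N by lia.
Qed.

End Flips.

Section BaseMatching.
Variable J : finType.
Hypothesis evenJ : ~~ odd #|J|.

Local Notation K := (#|J|./2).

Lemma card_double : #|J| = K.*2.
Proof. by have := odd_double_half #|J|; rewrite (negbTE evenJ) add0n. Qed.

Lemma first_lt (t : 'I_K) : (2 * t < #|J|)%N.
Proof. by have := ltn_ord t; rewrite {2}card_double -muln2; lia. Qed.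

Lemma second_lt (t : 'I_K) : (2 * t + 1 < #|J|)%N.
Proof. by have := ltn_ord t; rewrite {2}card_double -muln2; lia. Qed.

Definition first (t : 'I_K) : J := enum_val (Ordinal (first_lt t)).
Definition second (t : 'I_K) : J := enum_val (Ordinal (second_lt t)).

Lemma first_inj : injective first.
Proof. by move=> t u /enum_val_inj /(congr1 val) /= h; apply: val_inj => /=; lia. Qed.

Lemma second_inj : injective second.
Proof. by move=> t u /enum_val_inj /(congr1 val) /= h; apply: val_inj => /=; lia. Qed.

Lemma first_second t u : (first t == second u) = false.
Proof. by apply/eqP => /enum_val_inj /(congr1 val) /= h; lia. Qed.

Lemma second_first t u : (second t == first u) = false.
Proof. by rewrite eq_sym first_second. Qed.

Lemma base_cover (j : J) : exists t, j = first t \/ j = second t.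
Proof.
have hi := ltn_ord (enum_rank j); have hn := card_double; rewrite -muln2 in hn.
have e := odd_double_half (enum_rank j); rewrite -muln2 in e.
have ht : ((enum_rank j)./2 < K)%N.
  by move: hi e hn; set i := nat_of_ord _; set m := #|J|; lia.
exists (Ordinal ht); rewrite /first /second.
case ho: (odd (enum_rank j)); [right|left];
  (transitivity (enum_val (enum_rank j)); first by rewrite enum_rankK);
  congr enum_val; apply: val_inj => /=; move: e; rewrite ho /=; lia.
Qed.

Definition pair_of (g : {perm J}) (t : 'I_K) : {set J} := [set g (first t); g (second t)].
Definition matching (g : {perm J}) : {set {set J}} := [set pair_of g t | t : 'I_K].

Lemma matching_pair_partition g : pair_partition (matching g).
Proof.
apply/andP; split; last first.
  by apply/forall_inP => S /imsetP[t _ ->]; rewrite cards2 (inj_eq perm_inj) first_second.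
apply/and3P; split.
- apply/eqP/setP => j; rewrite inE; apply/bigcupP.
  have [t ht] := base_cover (g^-1 j)%g.
  exists (pair_of g t); first exact: imset_f.
  by rewrite !inE; case: ht => <-; rewrite permKV eqxx ?orbT.
- apply/trivIsetP => A B /imsetP[t _ ->] /imsetP[u _ ->] hne.
  have htu : t != u by apply: contra hne => /eqP ->.
  rewrite -setI_eq0; apply/eqP/setP => y; rewrite !inE.
  apply/negbTE/negP => /andP[]; case/orP=> /eqP ->;
    by rewrite !(inj_eq perm_inj) ?(inj_eq first_inj) ?(inj_eq second_inj)
      ?first_second ?second_first (negbTE htu).
- apply/negP => /imsetP[t _ /setP/(_ (g (first t)))].
  by rewrite !inE eqxx.
Qed.

Lemma pair_of_tperm g t u :
  pair_of (tperm (first t) (second t) * g)%g u = pair_of g u.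
Proof.
rewrite /pair_of !permM.
have [->|hut] := eqVneq u t; first by rewrite tpermL tpermR setUC.
by rewrite !tpermD // ?(inj_eq first_inj) ?(inj_eq second_inj) ?first_second
  ?second_first // eq_sym.
Qed.

End BaseMatching.

Lemma ordS_closed n (P : 'I_n -> bool) :
  (forall t, P t -> P (ordS t)) -> forall t u, P t -> P u.
Proof.
move=> hP t u Pt.
have iterE m : val (iter m (@ordS n) t) = ((t + m) %% n)%N.
  elim: m => [|m IH]; first by rewrite addn0 modn_small.
  by rewrite iterS /= IH -addn1 modnDml addn1 addnS.
have -> : u = iter (u + n - t) (@ordS n) t.
  apply: val_inj; rewrite iterE.
  have hu := ltn_ord u; have ht := ltn_ord t.
  have -> : (t + (u + n - t) = u + n)%N by lia.
  by rewrite modnDr modn_small.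
by elim: (u + n - t)%N => [|m IH] //=; apply: hP.
Qed.

Section Seed.
Variable J : finType.
Hypothesis evenJ : ~~ odd #|J|.
Implicit Types (z : {ffun J -> bool}).

Local Notation K := (#|J|./2).
Local Notation first := (first evenJ).
Local Notation second := (second evenJ).

Definition is10 z (t : 'I_K) := z (first t) && ~~ z (second t).
Definition is01 z (t : 'I_K) := ~~ z (first t) && z (second t).

Definition linked z := [forall t, is10 z t == is01 z (ordS t)].
Definition sign z : rat := if linked z then ((-1) ^+ #|[set t | is10 z t]|)%R else 0%R.

(* The seed function; its average over all relabellings will be EvenNAE. *)
Definition seed z : rat := if odd (weight z) then 0%R else (1 - sign z)%R.

Lemma seed_ge0 z : (0 <= seed z)%R.
Proof.
rewrite /seed /sign; case: ifP => // _; case: ifP => _; last by rewrite subr0.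
by rewrite -signr_odd; case: odd; rewrite ?expr1 ?expr0 ?opprK ?subrr.
Qed.

Lemma eq_seed z z' : odd (weight z) = odd (weight z') ->
  is10 z =1 is10 z' -> is01 z =1 is01 z' -> seed z = seed z'.
Proof.
move=> ho h10 h01; rewrite /seed /sign ho /linked.
rewrite (eq_forallb (fun t => congr2 eq_op (h10 t) (h01 (ordS t)))).
suff -> : [set t | is10 z t] = [set t | is10 z' t] by [].
by apply/setP => t; rewrite !inE h10.
Qed.

(* Flipping a base pair exchanges 10 and 01 on it, exactly as transposing it does. *)
Lemma seed_flip_pair z t :
  seed (flip z [set first t; second t]) = seed (relabel z (tperm (first t) (second t))).
Proof.
have fixed u : u != t ->
  tperm (first t) (second t) (first u) = first u /\
  tperm (first t) (second t) (second u) = second u.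
  move=> hut; have ne1 : first t != first u by rewrite (inj_eq (@first_inj _ evenJ)) eq_sym.
  have ne2 : second t != second u by rewrite (inj_eq (@second_inj _ evenJ)) eq_sym.
  by split; apply: tpermD; rewrite // ?first_second ?second_first.
apply: eq_seed => [|u|u]; first by rewrite odd_weight_flip2 ?first_second // weight_relabel.
all: rewrite /is10 /is01 !ffunE !inE.
all: have [->|hut] := eqVneq u t; first by rewrite !eqxx orbT tpermL tpermR negbK andbC.
all: have [-> ->] := fixed u hut.
all: by rewrite !(inj_eq (@first_inj _ evenJ)) !(inj_eq (@second_inj _ evenJ)) first_second
  second_first (negbTE hut).
Qed.

Definition defect z : rat := (sign z - (constant z)%:R)%R.

Lemma seedE z : seed z = (EvenNAE z - (~~ odd (weight z))%:R * defect z)%R.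
Proof.
rewrite EvenNAEE /seed /defect; case: odd; rewrite /= ?mul0r ?subr0 //.
by rewrite !mul1r opprB addrA subrK.
Qed.

Lemma constant_linked z : constant z -> linked z /\ sign z = 1%R.
Proof.
move=> hc; have no10 t : is10 z t = false.
  by case/orP: hc => /forallP h; rewrite /is10 ?h // (negbTE (h _)).
have no01 t : is01 z t = false.
  by case/orP: hc => /forallP h; rewrite /is01 ?h // (negbTE (h (second t))) andbF.
have hl : linked z by apply/forallP => t; rewrite no10 no01.
split=> //; rewrite /sign hl.
suff -> : [set t | is10 z t] = set0 by rewrite cards0 expr0.
by apply/setP => t; rewrite !inE no10.
Qed.

Definition descent z (t : 'I_K) := z (first t) && ~~ z (first (ordS t)).

Lemma descent_nonconstant z t : descent z t -> ~~ constant z.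
Proof.
case/andP => h1 h2; apply/negP; case/orP => /forallP h; first by move: h2; rewrite h.
by move: (h (first t)); rewrite h1.
Qed.

(* A linked point without descent has constant first coordinates, and then the
   linking condition forces it to be constant. *)
Lemma linked_no_descent z : linked z -> (forall t, ~~ descent z t) -> constant z.
Proof.
move=> /forallP hl hd.
have up t : z (first t) -> z (first (ordS t)).
  by move=> ht; move: (hd t); rewrite /descent ht negbK.
case: (pickP (fun t => z (first t))) => [t0 ht0|hn].
- have all1 t : z (first t) by apply: (@ordS_closed _ (fun t => z (first t)) up t0).
  apply/orP; left; apply/forallP => j; have [t [->|->]] := base_cover evenJ j => //.
  by move: (hl t); rewrite /is10 /is01 !all1 /=; case: (z (second t)).
- apply/orP; right; apply/forallP => j.
  have [t [->|->]] := base_cover evenJ j; first by rewrite hn.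
  by move: (hl (ord_pred t)); rewrite ord_predK /is10 /is01 !hn /=; case: (z (second t)).
Qed.

Lemma toggle_step z t : linked z -> descent z t ->
  let z' := flip z [set second t; second (ordS t)] in
  [/\ linked z', sign z' = (- sign z)%R, weight z' = weight z & descent z' =1 descent z].
Proof.
move=> hl hd z'; set s := ordS t.
move: (hd); rewrite /descent -/s => /andP[hft hfs].
have hst : s != t by apply: contraNneq hfs => ->.
have z'first u : z' (first u) = z (first u) by rewrite /z' ffunE !inE !first_second.
have z'second u : z' (second u) = ((u == t) || (u == s)) (+) z (second u).
  by rewrite /z' ffunE !inE !(inj_eq (@second_inj _ evenJ)); case: ifP.
have hls : ~~ z (second t) = z (second s).
  by move/forallP: hl => /(_ t) /eqP; rewrite /is10 /is01 -/s hft hfs.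
have e10 u : is10 z' u = (u == t) (+) is10 z u.
  rewrite /is10 z'first z'second.
  have [->|_] := eqVneq u t; first by rewrite hft.
  by have [->|_] := eqVneq u s; rewrite ?(negbTE hfs).
have e01 u : is01 z' u = (u == s) (+) is01 z u.
  rewrite /is01 z'first z'second.
  have [->|_] := eqVneq u s; first by rewrite orbT hfs.
  by have [->|_] := eqVneq u t; rewrite ?hft.
have hl' : linked z'.
  apply/forallP => u; rewrite e10 e01 (inj_eq (@ordS_inj _)).
  by move/forallP: hl => /(_ u) /eqP ->.
split=> //.
- rewrite /sign hl hl' (cardsD1 t [set u | is10 z' u]) (cardsD1 t [set u | is10 z u]).
  have -> : [set u | is10 z' u] :\ t = [set u | is10 z u] :\ t.
    by apply/setP => u; rewrite !inE e10; case: eqVneq.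
  by rewrite !inE e10 eqxx; case: (is10 z t); rewrite /= ?exprS ?mulN1r ?opprK.
- apply: weight_flip2; first by rewrite (inj_eq (@second_inj _ evenJ)) eq_sym.
  by rewrite -hls; case: (z (second t)).
- by move=> u; rewrite /descent !z'first.
Qed.

Definition toggle z : {ffun J -> bool} :=
  if linked z then
    if [pick t | descent z t] is Some t then flip z [set second t; second (ordS t)] else z
  else z.

Lemma toggle_cases z : (toggle z = z /\ defect z = 0%R) \/
  exists t, [/\ linked z, descent z t, [pick t | descent z t] = Some t &
                toggle z = flip z [set second t; second (ordS t)]].
Proof.
rewrite /toggle; case hl: (linked z); last first.
  left; split=> //; rewrite /defect /sign hl; case hc: (constant z); last by rewrite subr0.
  by have [] := constant_linked hc; rewrite hl.
case: pickP => [t ht|hn]; first by right; exists t.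
have hc : constant z by apply: linked_no_descent => // t; rewrite hn.
by have [_ hs] := constant_linked hc; left; rewrite /defect hs hc subrr.
Qed.

Lemma toggleP z :
  [/\ toggle (toggle z) = z, weight (toggle z) = weight z
    & defect (toggle z) = (- defect z)%R].
Proof.
case: (toggle_cases z) => [[e f]|[t [hl ht hpick ->]]]; first by rewrite !e f oppr0.
have [hl' hs hw hd] := toggle_step hl ht.
have hnc' : ~~ constant (flip z [set second t; second (ordS t)]).
  by apply: (@descent_nonconstant _ t); rewrite hd.
split=> //; first by rewrite /toggle hl' (eq_pick hd) hpick flipK.
by rewrite /defect hs (negbTE (descent_nonconstant ht)) (negbTE hnc') !subr0.
Qed.

Lemma sum_defect w : (\sum_(z | weight z == w) defect z = 0)%R.
Proof.
have toggle_inj : injective toggle by apply: (can_inj (g:=toggle)) => z; case: (toggleP z).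
set S := (\sum_(z | _) _)%R.
have : S = (- S)%R.
  rewrite {1}/S (reindex_inj toggle_inj) /= -sumrN.
  by apply: eq_big => z; case: (toggleP z) => _ -> // ->.
by move/eqP; rewrite -addr_eq0 -mulr2n mulrn_eq0 => /eqP.
Qed.

End Seed.

Section Average.
Variable J : finType.
Hypothesis evenJ : ~~ odd #|J|.
Implicit Types (x z : {ffun J -> bool}) (g : {perm J}) (M : {set {set J}}).

Local Notation seed := (seed evenJ).

Lemma sum_seed_class w :
  (\sum_(z : {ffun J -> bool} | weight z == w) seed z
   = \sum_(z : {ffun J -> bool} | weight z == w) EvenNAE z)%R.
Proof.
rewrite (eq_bigr (fun z => EvenNAE z - (~~ odd w)%:R * defect evenJ z)%R); last first.
  by move=> z /eqP <-; rewrite seedE.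
by rewrite sumrB -mulr_sumr sum_defect mulr0 subr0.
Qed.

Lemma sum_seed_relabel_weight x y : weight x = weight y ->
  (\sum_g seed (relabel y g) = \sum_g seed (relabel x g))%R.
Proof.
move=> hw; have [g0 ->] := relabel_transitive hw.
rewrite [RHS](reindex_inj (mulIg g0)) /=.
by apply: eq_bigr => g _; congr seed; apply/ffunP => j; rewrite !ffunE permM.
Qed.

Definition nperms : rat := (#|{perm J}|)%:R.

Lemma nperms_gt0 : (0 < nperms)%R.
Proof. by rewrite ltr0n; apply/card_gt0P; exists 1%g. Qed.

(* Averaging the seed over all relabellings yields EvenNAE: summing both sides
   over the weight class of x and exchanging sums reduces this to
   sum_seed_class, and the class size cancels. *)
Lemma sum_seed_relabel x : (\sum_g seed (relabel x g) = nperms * EvenNAE x)%R.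
Proof.
set w := weight x; set n := #|[pred y : {ffun J -> bool} | weight y == w]|.
have n_gt0 : (0 < n)%N by apply/card_gt0P; exists x; rewrite !inE.
apply: (pmulrnI n_gt0).
transitivity (\sum_(y | weight y == w) \sum_g seed (relabel y g))%R.
  by rewrite -sumr_const; apply: eq_bigr => y /eqP; apply: sum_seed_relabel_weight.
rewrite exchange_big /=.
rewrite (eq_bigr (fun=> \sum_(z : {ffun J -> bool} | weight z == w) EvenNAE z)%R);
  last first.
  by move=> g _; rewrite (sum_weight_class_relabel seed) sum_seed_class.
rewrite (eq_bigr (fun=> EvenNAE x) (P := fun z => weight z == w)); last first.
  by move=> z /eqP hz; rewrite /EvenNAE hz.
by rewrite !sumr_const /nperms mulr_natl mulrnAC.
Qed.

Definition decomp x M : rat :=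
  (nperms^-1 * \sum_(g | matching evenJ g == M) seed (relabel x g))%R.

Lemma decomp_ge0 x M : (0 <= decomp x M)%R.
Proof.
rewrite /decomp mulr_ge0 ?invr_ge0 ?(ltW nperms_gt0) //.
by apply: sumr_ge0 => g _; apply: seed_ge0.
Qed.

Lemma decomp_sum x : EvenNAE x = (\sum_(M | pair_partition M) decomp x M)%R.
Proof.
rewrite /decomp -mulr_sumr.
have -> : (\sum_(M | pair_partition M) \sum_(g | matching evenJ g == M) seed (relabel x g)
    = \sum_g seed (relabel x g))%R.
  by rewrite [RHS](partition_big (matching evenJ) (@pair_partition J)) // => g _;
    apply: matching_pair_partition.
by rewrite sum_seed_relabel mulKf // lt0r_neq0 // nperms_gt0.
Qed.

Definition swap_at (S : {set J}) g : {perm J} :=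
  if [pick t | pair_of evenJ g t == S] is Some t
  then (tperm (first evenJ t) (second evenJ t) * g)%g else g.

Lemma pair_of_swap_at S g : pair_of evenJ (swap_at S g) =1 pair_of evenJ g.
Proof. by move=> u; rewrite /swap_at; case: pickP => [t _|//]; rewrite pair_of_tperm. Qed.

Lemma swap_atK S : involutive (swap_at S).
Proof.
move=> g; have same_pairs u : (pair_of evenJ (swap_at S g) u == S) = (pair_of evenJ g u == S).
  by rewrite pair_of_swap_at.
rewrite {1}/swap_at (eq_pick same_pairs).
by rewrite /swap_at; case: pickP => [t _|//]; rewrite mulgA tperm2 mul1g.
Qed.

Lemma matching_swap_at S g : matching evenJ (swap_at S g) = matching evenJ g.
Proof. exact: eq_imset (pair_of_swap_at S g). Qed.

(* Flipping x on a pair S of M corresponds, inside the average, to swapping the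
   base pair sent onto S. *)
Lemma decomp_flip x M S : S \in M -> decomp (flip x S) M = decomp x M.
Proof.
move=> hS; rewrite /decomp; congr (_ * _)%R.
rewrite [RHS](reindex_inj (can_inj (swap_atK S))) /=.
apply: eq_big => g; first by rewrite matching_swap_at.
move=> /eqP hg; have /imsetP[t0 _ hS0] : S \in matching evenJ g by rewrite hg.
rewrite /swap_at; case: pickP => [t /eqP ht|hn]; last by move: (hn t0); rewrite -hS0 eqxx.
have -> : relabel (flip x S) g = flip (relabel x g) [set first evenJ t; second evenJ t].
  by apply/ffunP => j; rewrite !ffunE -ht !inE !(inj_eq perm_inj).
by rewrite seed_flip_pair; congr seed; apply/ffunP => j; rewrite !ffunE permM.
Qed.

End Average.

Unset Implicit Arguments.

Theorem lemma12 (J : finType) (hJ : ~~ odd #|J|) :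
  has_2_decomposition (@EvenNAE J).
Proof.
exists (decomp hJ); split.
- by move=> x M _; apply: decomp_ge0.
- exact: decomp_sum.
- by move=> x M S _; apply: decomp_flip.
Qed.
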